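(* Let $\varphi:G\to H$ be a surjective group homomorphism. Then the homomorphism $f_\varphi:H_2(H)\to K_\varphi/\Gamma_\varphi$ induced by the central extension $$1\to K_\varphi/\Gamma_\varphi\to G/\Gamma_\varphi\xrightarrow{\ \varphi\ } H\to 1$$ coincides with the composition $$\psi\circ(i\circ\varepsilon)^{-1}\circ\partial:H_2(H)\to H_1(G,H)\to H_1(\mathrm{Coker}(\delta_\varphi))\to K_\varphi/\Gamma_\varphi .$$
   Context: Group homology: for a group $G$ let $C_n(G)=\mathbb Z[G^n]$ (free abelian group on $G^n$) with differential $d=\sum_{i=0}^n(-1)^id_i$, where $d_0(g_1,\dots,g_n)=(g_2,\dots,g_n)$, $d_i(g_1,\dots,g_n)=(g_1,\dots,g_ig_{i+1},\dots,g_n)$ for $1\le i\le n-1$, $d_n(g_1,\dots,g_n)=(g_1,\dots,g_{n-1})$; $H_n(G)$ is its homology. For a homomorphism $\varphi:G\to H$, $\varphi_*$ acts coordinatewise on chains. The relative complex has $\mathrm{Tot}_n=\mathbb Z[H^{n+1}]\oplus\mathbb Z[G^n]$ with differential $d(\varphi)(y,x)=(dy+\varphi_*(x),-dx)$; its homology is $H_n(G,H)$. For $\varphi$ surjective, the boundary map $\partial:H_{n+1}(H)\to H_n(G,H)$ is defined (with this sign convention) by $\partial[z]=[(0,-d\tilde z)]$, where $z$ is a cycle and $\tilde z\in\mathbb Z[G^{n+1}]$ is any chain with $\varphi_*(\tilde z)=z$. Cokernel complex: $G^n\times_{H^n}G^n$ is the set of pairs $(g^1,g^2)\in G^n\times G^n$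 with $\varphi_*(g^1)=\varphi_*(g^2)$; $\mathrm{Coker}_n(\delta_\varphi)$ is $\mathbb Z[G^n\times_{H^n}G^n]$ modulo the relations $(g^1,g^2)+(g^2,g^3)\sim(g^1,g^3)$, with differential $(g^1,g^2)\mapsto\sum_{i=0}^n(-1)^i(d_ig^1,d_ig^2)$. The chain map $i\circ\varepsilon:\mathrm{Coker}_n(\delta_\varphi)\to\mathrm{Tot}_n$, $(g^1,g^2)\mapsto(0,g^1-g^2)$, induces an isomorphism $H_n(\mathrm{Coker}(\delta_\varphi))\cong H_n(G,H)$ when $\varphi$ is surjective (a known result of M. Levine). $K_\varphi=\ker\varphi$ and $\Gamma_\varphi$ is the smallest normal subgroup of $G$ containing all $gkg^{-1}k^{-1}$ with $g\in G$, $k\in K_\varphi$. The map $\psi:\mathbb Z[G\times_HG]\to K_\varphi/\Gamma_\varphi$, $\sum_iz_i(x_i,y_i)\mapsto\prod_i(x_iy_i^{-1})^{z_i}$ descends to an isomorphism $\psi:H_1(\mathrm{Coker}(\delta_\varphi))\to K_\varphi/\Gamma_\varphi$ (Levine). The map $f_\varphi$ is explicitly: write a class in $H_2(H)$ as represented by a cycle $x=\sum_{i=1}^{2n}(-1)^i(x_i,y_i)$ and choose any set-theoretic section $t:H\to G$ of $\varphi$; then $f_\varphi[x]=\Big(\prod_{k=1}^n t(x_{2k})t(y_{2k})t(x_{2k}y_{2k})^{-1}\Big)\cdot\Big(\prod_{k=1}^n t(x_{2k-1})t(y_{2k-1})t(x_{2k-1}y_{2k-1})^{-1}\Big)^{-1}\in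 K_\varphi/\Gamma_\varphi$. *)

(* (possibly infinite) groups are mathcomp's [groupType]
   from boot/monoid.v; free abelian groups Z[X] are modelled as formal
   integer combinations (lists) compared coefficientwise. *)
From HB Require Import structures.
From mathcomp Require Import all_boot all_order all_algebra.
Set Implicit Arguments. Unset Strict Implicit. Unset Printing Implicit Defensive.

Definition chain (X : eqType) := seq (int * X).

Definition coef (X : eqType) (c : chain X) (x : X) : int :=
  (\sum_(p <- c | p.2 == x) p.1)%R.

Definition chain_eq (X : eqType) (c c' : chain X) : Prop :=
  forall x, coef c x = coef c' x.

Definition chain_add (X : eqType) (c c' : chain X) : chain X := c ++ c'.
Definition chain_opp (X : eqType) (c : chain X) : chain X :=
  [seq ((- p.1)%R, p.2) | p <- c].
Definition chain_bind (X Y : eqType) (c : chain X) (f : X -> chain Y) : chain Y :=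
  flatten [seq [seq ((p.1 * q.1)%R, q.2) | q <- f p.2] | p <- c].
Definition chain_map (X Y : eqType) (f : X -> Y) (c : chain X) : chain Y :=
  [seq (p.1, f p.2) | p <- c].

Local Open Scope group_scope.

(* Bar complex C_n(G) = Z[G^n] in degrees 1,2,3 (G^1 = G, G^2 = G*G,   *)
(* G^3 = G*G*G), with d = sum_i (-1)^i d_i.                             *)
Definition bd2 (G : groupType) (c : chain (G * G)%type) : chain G :=
  chain_bind c (fun g => [:: (1%R, g.2); ((-1)%R, g.1 * g.2); (1%R, g.1)]).

Definition bd3 (G : groupType) (c : chain (G * G * G)%type) : chain (G * G)%type :=
  chain_bind c (fun g =>
    let: (g1, g2, g3) := g in
    [:: (1%R, (g2, g3)); ((-1)%R, (g1 * g2, g3));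
        (1%R, (g1, g2 * g3)); ((-1)%R, (g1, g2))]).

Definition push1 (G H : groupType) (phi : G -> H) (c : chain G) : chain H :=
  chain_map phi c.
Definition push2 (G H : groupType) (phi : G -> H) (c : chain (G * G)%type)
  : chain (H * H)%type := chain_map (fun g => (phi g.1, phi g.2)) c.

(* Relative complex: Tot_n = Z[H^{n+1}] (+) Z[G^n],                      *)
(* d(y,x) = (dy + phi_* x, - dx).                                       *)
Definition tot1_boundary (G H : groupType) (phi : G -> H)
  (a : chain (H * H)%type) (b : chain G) : Prop :=
  exists (y : chain (H * H * H)%type) (w : chain (G * G)%type),
    chain_eq (chain_add (bd3 y) (push2 phi w)) a /\
    chain_eq (chain_opp (bd2 w)) b.

Definition tot1_homologous (G H : groupType) (phi : G -> H)
  (a1 : chain (H * H)%type) (b1 : chain G)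
  (a2 : chain (H * H)%type) (b2 : chain G) : Prop :=
  tot1_boundary phi (chain_add a1 (chain_opp a2)) (chain_add b1 (chain_opp b2)).

(* Representative of the boundary  d[z] = [(0, - d z~)]  where z~ lifts z *)
Definition partial_rep (G : groupType) (zt : chain (G * G)%type)
  : chain G := chain_opp (bd2 zt).

(* Cokernel complex in degree 1: chains on G x_H G.                    *)
Definition in_fibre_prod (G H : groupType) (phi : G -> H) (c : chain (G * G)%type)
  : bool := all (fun p => phi p.2.1 == phi p.2.2) c.

(* i o eps : (g1,g2) |-> (0, g1 - g2)  (second component) *)
Definition ieps (G : groupType) (c : chain (G * G)%type) : chain G :=
  chain_bind c (fun g => [:: (1%R, g.1); ((-1)%R, g.2)]).

Definition zpowg (G : groupType) (g : G) (z : int) : G :=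
  match z with
  | Posz n => g ^+ n
  | Negz n => (g ^+ n.+1)^-1
  end.

(* psi : sum z_i (x_i,y_i) |-> prod (x_i y_i^-1)^{z_i}, as an element of G
   (to be read in K_phi / Gamma_phi) *)
Definition psi_rep (G : groupType) (c : chain (G * G)%type) : G :=
  \prod_(p <- c) zpowg (p.2.1 * (p.2.2)^-1) p.1.

Definition normal_subgroup (G : groupType) (N : G -> Prop) : Prop :=
  [/\ N 1, (forall x y, N x -> N y -> N (x * y)), (forall x, N x -> N x^-1)
    & (forall g x, N x -> N (g * x * g^-1))].

Definition Gamma (G H : groupType) (phi : G -> H) (x : G) : Prop :=
  forall N : G -> Prop, normal_subgroup N ->
    (forall g k, phi k = 1 -> N (g * k * g^-1 * k^-1)) -> N x.

Definition eq_mod_Gamma (G H : groupType) (phi : G -> H) (a b : G) : Prop :=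
  Gamma phi (a * b^-1).

(* f_phi.  A 2-cycle  x = sum_{i=1}^{2n} (-1)^i (x_i,y_i)  is given by   *)
(* Pl = [(x_2,y_2); (x_4,y_4); ...; (x_2n,y_2n)]  (coefficient +1) and   *)
(* Mi = [(x_1,y_1); (x_3,y_3); ...; (x_2n-1,y_2n-1)] (coefficient -1).   *)
Definition cycle_chain (H : groupType) (Pl Mi : seq (H * H)) : chain (H * H)%type :=
  [seq (1%R, p) | p <- Pl] ++ [seq ((-1)%R, p) | p <- Mi].

Definition f_phi_rep (G H : groupType) (t : H -> G) (Pl Mi : seq (H * H)) : G :=
  (\prod_(p <- Pl) (t p.1 * t p.2 * (t (p.1 * p.2))^-1)) *
  (\prod_(p <- Mi) (t p.1 * t p.2 * (t (p.1 * p.2))^-1))^-1.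

From HB Require Import structures.
From mathcomp Require Import all_boot all_order all_algebra.
From mathcomp Require Import boolp.
Set Implicit Arguments. Unset Strict Implicit. Unset Printing Implicit Defensive.
Import GRing.Theory.

(* Write Q = K_phi / Gamma_phi; it is an abelian group because K_phi is
   central modulo Gamma_phi.  Fix the section t of phi and consider
     - the 1-cochain sigma on G, sigma(g) = [g t(phi g)^-1] in Q, and
     - the 2-cochain omega on H, the class of the factor set
       omega(h1, h2) = [t(h1) t(h2) t(h1 h2)^-1] in Q.
   Two identities drive everything: omega is a 2-cocycle, and its pullback
   along phi is the coboundary of -sigma.  Extending both Z-linearly,
     - f_phi of the cycle x is omega(x);
     - psi(c) is sigma(ieps c), since x y^-1 = sigma(x) - sigma(y) in Q
       whenever phi x = phi y;
     - if (0, ieps c) is homologous to the boundary (0, -d zt) of x in the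
       relative complex, the two identities give sigma(ieps c) = omega(x). *)

Section LinearExtension.
Local Open Scope ring_scope.
Variables (X : eqType) (A : zmodType).

Definition lin (F : X -> A) (b : chain X) : A := \sum_(p <- b) F p.2 *~ p.1.

Lemma lin_cat F b b' : lin F (chain_add b b') = lin F b + lin F b'.
Proof. by rewrite /lin /chain_add big_cat. Qed.

Lemma lin_opp F b : lin F (chain_opp b) = - lin F b.
Proof. by rewrite /lin /chain_opp big_map -sumrN; apply: eq_bigr => p _; rewrite mulrNz. Qed.

Lemma lin_ext F F' b : F =1 F' -> lin F b = lin F' b.
Proof. by move=> eqFF'; apply: eq_bigr => p _; rewrite eqFF'. Qed.

Lemma lin_oppF F b : lin (fun x => - F x) b = - lin F b.
Proof. by rewrite /lin -sumrN; apply: eq_bigr => p _; rewrite mulNrz. Qed.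

Lemma lin0F b : lin (fun=> 0) b = 0.
Proof. by rewrite /lin big1 // => p _; rewrite mul0rz. Qed.

Lemma lin_coef F (s : seq X) b :
  uniq s -> {subset [seq p.2 | p <- b] <= s} ->
  lin F b = \sum_(x <- s) F x *~ coef b x.
Proof.
move=> s_uniq; elim: b => [|[n y] b IHb] b_sub.
  by rewrite /lin big_nil big1 // => x _; rewrite /coef big_nil mulr0z.
have y_s : y \in s by apply: b_sub; rewrite inE eqxx.
rewrite /lin big_cons -/(lin F b) IHb; last by move=> x x_b; apply: b_sub; rewrite inE x_b orbT.
under [RHS]eq_bigr => x _ do rewrite /coef big_cons /= -/(coef b x) fun_if mulrzDr.
rewrite [in RHS](bigD1_seq y) //= eqxx [in LHS](bigD1_seq y) //= addrA.
congr (_ + _); apply: eq_bigr => x.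
by rewrite eq_sym => /negbTE ->.
Qed.

Lemma lin_eq F b b' : chain_eq b b' -> lin F b = lin F b'.
Proof.
move=> eq_bb'; set s := undup [seq p.2 | p <- b ++ b'].
have s_uniq : uniq s := undup_uniq _.
rewrite (lin_coef F s_uniq) => [|x x_b]; last by rewrite mem_undup map_cat mem_cat x_b.
rewrite (lin_coef F (b := b') s_uniq) => [|x x_b']; last by rewrite mem_undup map_cat mem_cat x_b' orbT.
by apply: eq_bigr => x _; rewrite eq_bb'.
Qed.

End LinearExtension.

Section LinearExtensionFunctoriality.
Local Open Scope ring_scope.
Variables (X Y : eqType) (A : zmodType).

Lemma lin_map (F : Y -> A) (f : X -> Y) b : lin F (chain_map f b) = lin (F \o f) b.
Proof. by rewrite /lin /chain_map big_map. Qed.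

Lemma lin_bind (F : Y -> A) (f : X -> chain Y) b :
  lin F (chain_bind b f) = lin (fun x => lin F (f x)) b.
Proof.
rewrite /lin /chain_bind big_flatten big_map; apply: eq_bigr => p _.
by rewrite big_map mulrz_suml; apply: eq_bigr => r _; rewrite mulrC mulrzA.
Qed.

End LinearExtensionFunctoriality.

Lemma lin_cycle_chain (H : groupType) (A : zmodType) (F : H * H -> A) (Pl Mi : seq (H * H)) :
  lin F (cycle_chain Pl Mi) = (\sum_(p <- Pl) F p - \sum_(p <- Mi) F p)%R.
Proof.
rewrite /lin /cycle_chain big_cat !big_map -sumrN.
by congr (_ + _)%R; apply: eq_bigr => p _; rewrite ?mulrN1z.
Qed.

Local Open Scope group_scope.
Local Open Scope quotient_scope.

Section CentralQuotient.
Variables (G H : groupType) (phi : G -> H).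
Hypothesis phiM : {morph phi : x y / x * y}.

Lemma phi1 : phi 1 = 1.
Proof. by apply: (@mulgI _ (phi 1)); rewrite -phiM !mulg1. Qed.

Lemma phiV x : phi x^-1 = (phi x)^-1.
Proof. by apply: (@mulgI _ (phi x)); rewrite -phiM !mulgV phi1. Qed.

Lemma ker_mul x y : phi x = 1 -> phi y = 1 -> phi (x * y) = 1.
Proof. by rewrite phiM => -> ->; rewrite mulg1. Qed.

Lemma ker_inv x : phi x = 1 -> phi x^-1 = 1.
Proof. by rewrite phiV => ->; rewrite invg1. Qed.

Lemma ker_conj g x : phi x = 1 -> phi (g * x * g^-1) = 1.
Proof. by rewrite !phiM phiV => ->; rewrite mulg1 mulgV. Qed.

Lemma ker_prod (I : eqType) (r : seq I) (F : I -> G) :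
  (forall i, i \in r -> phi (F i) = 1) -> phi (\prod_(i <- r) F i) = 1.
Proof.
elim: r => [|i r IHr] F_ker; first by rewrite big_nil phi1.
rewrite big_cons ker_mul ?F_ker ?mem_head // IHr // => j j_r.
by apply: F_ker; rewrite inE j_r orbT.
Qed.

Lemma ker_exp x n : phi x = 1 -> phi (x ^+ n) = 1.
Proof. by move=> x_ker; elim: n => [|n IHn]; [exact: phi1 | rewrite expgS ker_mul]. Qed.

Lemma ker_div_fibre x y : phi x = phi y -> phi (x * y^-1) = 1.
Proof. by move=> same_image; rewrite phiM phiV same_image mulgV. Qed.

Lemma ker_zpow x z : phi x = 1 -> phi (zpowg x z) = 1.
Proof. by case: z => n x_ker; [exact: ker_exp | exact/ker_inv/ker_exp]. Qed.

Lemma Gamma1 : Gamma phi 1.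
Proof. by move=> N [N1 _ _ _]. Qed.

Lemma GammaM x y : Gamma phi x -> Gamma phi y -> Gamma phi (x * y).
Proof.
move=> Gx Gy N N_norm N_comm; have [_ NM _ _] := N_norm.
exact: NM (Gx N N_norm N_comm) (Gy N N_norm N_comm).
Qed.

Lemma GammaV x : Gamma phi x -> Gamma phi x^-1.
Proof.
move=> Gx N N_norm N_comm; have [_ _ NV _] := N_norm.
exact: NV (Gx N N_norm N_comm).
Qed.

Lemma GammaJ g x : Gamma phi x -> Gamma phi (g * x * g^-1).
Proof.
move=> Gx N N_norm N_comm; have [_ _ _ NJ] := N_norm.
exact: NJ (Gx N N_norm N_comm).
Qed.

Lemma Gamma_comm g k : phi k = 1 -> Gamma phi (g * k * g^-1 * k^-1).
Proof. by move=> k_ker N _; apply. Qed.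

Local Notation "x == y %[mod 'Gamma ]" := (eq_mod_Gamma phi x y)
  (at level 70, y at next level).

Lemma eq_mod_Gamma_refl x : x == x %[mod 'Gamma].
Proof. by rewrite /eq_mod_Gamma mulgV; exact: Gamma1. Qed.

Lemma eq_mod_Gamma_sym x y : x == y %[mod 'Gamma] -> y == x %[mod 'Gamma].
Proof. by move/GammaV; rewrite /eq_mod_Gamma invgM invgK. Qed.

Lemma eq_mod_Gamma_trans x y z :
  x == y %[mod 'Gamma] -> y == z %[mod 'Gamma] -> x == z %[mod 'Gamma].
Proof. by move=> Gxy /(GammaM Gxy); rewrite /eq_mod_Gamma mulgA mulgVK. Qed.

Lemma eq_mod_Gamma_mul a a' b b' :
  a == a' %[mod 'Gamma] -> b == b' %[mod 'Gamma] -> a * b == a' * b' %[mod 'Gamma].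
Proof.
move=> Gaa' /(GammaJ a) Gbb'; rewrite /eq_mod_Gamma.
have -> : a * b * (a' * b')^-1 = a * (b * b'^-1) * a^-1 * (a * a'^-1).
  by rewrite invgM !mulgA mulgVK.
exact: GammaM.
Qed.

Lemma eq_mod_Gamma_inv a a' : a == a' %[mod 'Gamma] -> a^-1 == a'^-1 %[mod 'Gamma].
Proof.
move/eq_mod_Gamma_sym/(GammaJ a^-1); rewrite /eq_mod_Gamma invgK.
by rewrite invgK !mulgA mulgVK.
Qed.

Definition kernel := {x : G | phi x == 1}.

Definition kernel_cong : rel kernel := fun a b => `[< val a == val b %[mod 'Gamma] >].

Lemma kernel_cong_equiv : equiv_class_of kernel_cong.
Proof.
rewrite /kernel_cong; split.
- by move=> a; apply/asboolP; exact: eq_mod_Gamma_refl.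
- by move=> a b; apply/asboolP/asboolP; exact: eq_mod_Gamma_sym.
- by move=> b a c /asboolP Gab /asboolP Gbc; apply/asboolP; exact: eq_mod_Gamma_trans Gab Gbc.
Qed.

Canonical kernel_cong_equiv_rel := EquivRelPack kernel_cong_equiv.

Definition KmodGamma := {eq_quot kernel_cong}.
HB.instance Definition _ := Choice.copy KmodGamma {eq_quot kernel_cong}.

Definition kernel1 : kernel := exist _ 1 (introT eqP phi1).

(* The class modulo Gamma_phi of an element of G (only meaningful on K_phi,
   where it reflects congruence modulo Gamma_phi). *)
Definition kq (x : G) : KmodGamma := \pi_KmodGamma (insubd kernel1 x).

Lemma kq_eqP x y : phi x = 1 -> phi y = 1 -> kq x = kq y <-> x == y %[mod 'Gamma].
Proof.
move=> /eqP x_ker /eqP y_ker; rewrite /kq.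
split=> [/eqmodP/asboolP | Gxy]; first by rewrite !insubdK.
by apply/eqmodP/asboolP; rewrite !insubdK.
Qed.

Lemma kq_repr a : kq (val (repr a)) = a.
Proof. by rewrite /kq valKd reprK. Qed.

Definition kq_add (a b : KmodGamma) : KmodGamma := kq (val (repr a) * val (repr b)).
Definition kq_opp (a : KmodGamma) : KmodGamma := kq (val (repr a))^-1.
Definition kq_zero : KmodGamma := kq 1.

Lemma repr_ker (a : KmodGamma) : phi (val (repr a)) = 1.
Proof. exact/eqP/(valP (repr a)). Qed.

Lemma kq_ind (P : KmodGamma -> Prop) :
  (forall x, phi x = 1 -> P (kq x)) -> forall a, P a.
Proof. by move=> P_kq a; rewrite -[a]kq_repr; apply/P_kq/repr_ker. Qed.

Lemma repr_eq_mod x : phi x = 1 -> val (repr (kq x)) == x %[mod 'Gamma].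
Proof. by move=> x_ker; apply/kq_eqP; rewrite ?kq_repr ?repr_ker. Qed.

Lemma kq_addE x y : phi x = 1 -> phi y = 1 -> kq_add (kq x) (kq y) = kq (x * y).
Proof.
move=> x_ker y_ker; apply/kq_eqP; rewrite ?ker_mul //; try exact: repr_ker.
by apply: eq_mod_Gamma_mul; apply: repr_eq_mod.
Qed.

Lemma kq_oppE x : phi x = 1 -> kq_opp (kq x) = kq x^-1.
Proof.
move=> x_ker; apply/kq_eqP; rewrite ?ker_inv //; try exact: repr_ker.
exact: eq_mod_Gamma_inv (repr_eq_mod x_ker).
Qed.

Lemma kq_addA : associative kq_add.
Proof.
elim/kq_ind => x x_ker; elim/kq_ind => y y_ker; elim/kq_ind => z z_ker.
by rewrite !kq_addE ?ker_mul ?mulgA.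
Qed.

(* Commutativity is where centrality of K_phi modulo Gamma_phi is used. *)
Lemma kq_addC : commutative kq_add.
Proof.
elim/kq_ind => x x_ker; elim/kq_ind => y y_ker; rewrite !kq_addE //.
apply/kq_eqP; rewrite ?ker_mul //.
by rewrite /eq_mod_Gamma invgM !mulgA; apply: Gamma_comm.
Qed.

Lemma kq_add0 : left_id kq_zero kq_add.
Proof. by elim/kq_ind => x x_ker; rewrite /kq_zero kq_addE ?phi1 ?mul1g. Qed.

Lemma kq_addN : left_inverse kq_zero kq_opp kq_add.
Proof. by elim/kq_ind => x x_ker; rewrite kq_oppE // kq_addE ?ker_inv ?mulVg. Qed.

HB.instance Definition _ := GRing.isZmodule.Build KmodGamma kq_addA kq_addC kq_add0 kq_addN.

Lemma kq1 : kq 1 = 0%R.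
Proof. by []. Qed.

Lemma kqM x y : phi x = 1 -> phi y = 1 -> kq (x * y) = (kq x + kq y)%R.
Proof. by move=> x_ker y_ker; rewrite -kq_addE. Qed.

Lemma kqV x : phi x = 1 -> kq x^-1 = (- kq x)%R.
Proof. by move=> x_ker; rewrite -kq_oppE. Qed.

Lemma kq_conj g x : phi x = 1 -> kq (g * x * g^-1) = kq x.
Proof. by move=> x_ker; apply/kq_eqP; rewrite ?ker_conj //; apply: Gamma_comm. Qed.

Lemma kq_zpow x z : phi x = 1 -> kq (zpowg x z) = (kq x *~ z)%R.
Proof.
move=> x_ker; have kq_exp n : kq (x ^+ n) = (kq x *+ n)%R.
  elim: n => [|n IHn]; first by rewrite expg0 kq1 mulr0n.
  by rewrite expgS kqM ?IHn ?mulrS ?ker_exp.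
by case: z => n /=; rewrite ?kqV ?kq_exp ?NegzE ?mulrNz ?ker_exp.
Qed.

Lemma kq_prod (I : eqType) (r : seq I) (F : I -> G) :
  (forall i, i \in r -> phi (F i) = 1) -> kq (\prod_(i <- r) F i) = (\sum_(i <- r) kq (F i))%R.
Proof.
elim: r => [|i r IHr] F_ker; first by rewrite !big_nil.
have F_ker' j : j \in r -> phi (F j) = 1 by move=> j_r; apply: F_ker; rewrite inE j_r orbT.
by rewrite !big_cons kqM ?IHr ?ker_prod ?F_ker ?mem_head.
Qed.

Section FactorSet.
Variable t : H -> G.
Hypothesis ht : forall h, phi (t h) = h.

Definition ker_part (g : G) : G := g * (t (phi g))^-1.
Definition factor_set (h1 h2 : H) : G := t h1 * t h2 * (t (h1 * h2))^-1.

Lemma ker_part_ker g : phi (ker_part g) = 1.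
Proof. by rewrite /ker_part phiM phiV ht mulgV. Qed.

Lemma factor_set_ker h1 h2 : phi (factor_set h1 h2) = 1.
Proof. by rewrite /factor_set !phiM phiV !ht mulgV. Qed.

Definition sigma (g : G) : KmodGamma := kq (ker_part g).
Definition omega (h : H * H) : KmodGamma := kq (factor_set h.1 h.2).

Lemma sigma_coboundary g1 g2 :
  (sigma g2 - sigma (g1 * g2)%g + sigma g1 = - omega (phi g1, phi g2))%R.
Proof.
have split_ker_part : ker_part (g1 * g2) =
    g1 * ker_part g2 * g1^-1 * ker_part g1 * factor_set (phi g1) (phi g2).
  by rewrite /ker_part /factor_set !mulgA !mulgVK phiM.
have ker1 := ker_part_ker g1; have ker2 := ker_part_ker g2.
have ker2J := ker_conj g1 ker2.
rewrite /sigma /omega split_ker_part (kqM (ker_mul ker2J ker1) (factor_set_ker _ _)).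
rewrite (kqM ker2J ker1) (kq_conj g1 ker2).
by rewrite !opprD !addrA subrr add0r addrAC addNr add0r.
Qed.

Lemma omega_cocycle a b c :
  (omega (a, b) + omega ((a * b)%g, c) = omega (b, c) + omega (a, (b * c)%g))%R.
Proof.
have factor_set_assoc : (factor_set a b * factor_set (a * b) c =
    t a * factor_set b c * (t a)^-1 * factor_set a (b * c)).
  by rewrite /factor_set !mulgA !mulgVK.
have kerJ := ker_conj (t a) (factor_set_ker b c).
rewrite /omega /= -(kqM (factor_set_ker a b) (factor_set_ker _ c)) factor_set_assoc.
by rewrite (kqM kerJ (factor_set_ker a _)) kq_conj ?factor_set_ker.
Qed.

Lemma lin_sigma_bd2 w : lin sigma (bd2 w) = (- lin omega (push2 phi w))%R.
Proof.
rewrite /bd2 lin_bind /push2 lin_map -lin_oppF; apply: lin_ext => -[g1 g2] /=.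
by rewrite /lin !big_cons big_nil /= mulr1z mulrN1z addr0 addrA sigma_coboundary.
Qed.

Lemma lin_omega_bd3 y : lin omega (bd3 y) = 0%R.
Proof.
rewrite /bd3 lin_bind -(lin0F _ y); apply: lin_ext => -[[a b] c] /=.
rewrite /lin !big_cons big_nil /= !mulr1z !mulrN1z addr0 !addrA.
by apply/eqP; rewrite subr_eq add0r addrAC subr_eq omega_cocycle.
Qed.

Lemma ker_factor_set_prod (r : seq (H * H)) : phi (\prod_(p <- r) factor_set p.1 p.2) = 1.
Proof. by apply: ker_prod => p _; apply: factor_set_ker. Qed.

Lemma ker_f_phi_rep Pl Mi : phi (f_phi_rep t Pl Mi) = 1.
Proof. by rewrite /f_phi_rep ker_mul ?ker_inv ?ker_factor_set_prod. Qed.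

Lemma kq_f_phi_rep Pl Mi : kq (f_phi_rep t Pl Mi) = lin omega (cycle_chain Pl Mi).
Proof.
have kq_factor_set_prod r : kq (\prod_(p <- r) factor_set p.1 p.2) = (\sum_(p <- r) omega p)%R.
  by rewrite kq_prod // => p _; apply: factor_set_ker.
rewrite /f_phi_rep kqM ?ker_inv ?ker_factor_set_prod // kqV ?ker_factor_set_prod //.
by rewrite !kq_factor_set_prod lin_cycle_chain.
Qed.

Lemma ker_psi_rep c : in_fibre_prod phi c -> phi (psi_rep c) = 1.
Proof.
move=> /allP c_fibre; apply: ker_prod => p /c_fibre /eqP same_image.
exact/ker_zpow/ker_div_fibre.
Qed.

Lemma kq_psi_rep c : in_fibre_prod phi c -> kq (psi_rep c) = lin sigma (ieps c).
Proof.
move=> /allP c_fibre; rewrite /ieps lin_bind /lin /psi_rep kq_prod; last first.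
  by move=> p /c_fibre /eqP same_image; apply/ker_zpow/ker_div_fibre.
rewrite big_seq [RHS]big_seq; apply: eq_bigr => -[n [x y]] /c_fibre /eqP /= same_image.
have -> : x * y^-1 = ker_part x * (ker_part y)^-1.
  by rewrite /ker_part same_image invgM invgK !mulgA mulgVK.
have [kx ky] := (ker_part_ker x, ker_part_ker y).
rewrite (kq_zpow _ (ker_mul kx (ker_inv ky))) (kqM kx (ker_inv ky)) (kqV ky).
by rewrite !big_cons big_nil /= mulr1z mulrN1z addr0.
Qed.

Lemma relative_homology_lin zt c :
  tot1_homologous phi [::] (ieps c) [::] (partial_rep zt) ->
  lin sigma (ieps c) = lin omega (push2 phi zt).
Proof.
case=> y [w [/(lin_eq omega) top_eq /(lin_eq sigma) bottom_eq]].
have omega_w : lin omega (push2 phi w) = 0%R.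
  by move: top_eq; rewrite !lin_cat lin_omega_bd3 add0r lin_opp /lin !big_nil oppr0 addr0.
move: bottom_eq; rewrite lin_opp lin_sigma_bd2 omega_w lin_cat /partial_rep.
by rewrite !lin_opp !opprK lin_sigma_bd2 => /esym/eqP; rewrite subr_eq0 => /eqP.
Qed.

Lemma f_phi_psi_agree Pl Mi zt c :
  chain_eq (push2 phi zt) (cycle_chain Pl Mi) -> in_fibre_prod phi c ->
  tot1_homologous phi [::] (ieps c) [::] (partial_rep zt) ->
  eq_mod_Gamma phi (f_phi_rep t Pl Mi) (psi_rep c).
Proof.
move=> zt_lifts c_fibre homologous.
apply/kq_eqP; [exact: ker_f_phi_rep | exact: ker_psi_rep |].
by rewrite kq_f_phi_rep kq_psi_rep // (relative_homology_lin homologous) (lin_eq _ zt_lifts).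
Qed.

End FactorSet.

End CentralQuotient.

Theorem mainTheorem1
  (G H : groupType) (phi : G -> H)
  (phiM : {morph phi : x y / x * y})
  (phi_surj : forall h : H, exists g : G, phi g = h)
  (Pl Mi : seq (H * H))
  (hsize : size Pl = size Mi)
  (hcycle : chain_eq (bd2 (cycle_chain Pl Mi)) [::])
  (t : H -> G) (ht : forall h, phi (t h) = h)
  (zt : chain (G * G)%type)
  (hzt : chain_eq (push2 phi zt) (cycle_chain Pl Mi))
  (c : chain (G * G)%type)
  (hc : in_fibre_prod phi c)
  (hpre : tot1_homologous phi [::] (ieps c) [::] (partial_rep zt)) :
  eq_mod_Gamma phi (f_phi_rep t Pl Mi) (psi_rep c).
Proof. exact (f_phi_psi_agree phiM ht hzt hc hpre). Qed.
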